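(* Let $\phi$ be a flow of a compact metric space $X$. Suppose that for every $\epsilon>0$ there is $\delta>0$ such that $B[x,\delta\,dist(x,Sing(\phi))]\subset\phi_{[-\epsilon,\epsilon]}(x)$ for every $x\in X$. Then $\phi$ is both singular-expansive and singular-equicontinuous.
   Context: A flow is a continuous $\phi:\mathbb{R}\times X\to X$ with $\phi_0=\mathrm{id}$, $\phi_{t+s}=\phi_t\circ\phi_s$; $\phi_I(x)=\{\phi_t(x):t\in I\}$; $Sing(\phi)$ is the set of fixed points; $dist(z,A)=\inf_{a\in A}d(z,a)$, with $dist(z,\emptyset)=diam(X)$; $B[x,r]=\{y:d(x,y)\le r\}$. $\phi$ is singular-expansive if for every $\epsilon>0$ there is $\delta>0$ such that whenever $x,y\in X$ and an increasing homeomorphism $s:\mathbb{R}\to\mathbb{R}$ satisfy $d(\phi_t(x),\phi_{s(t)}(y))\le\delta\,dist(\phi_t(x),Sing(\phi))$ for all $t$, then $\phi_{s(t_0)}(y)\in\phi_{[t_0-\epsilon,t_0+\epsilon]}(x)$ for some $t_0\in\mathbb{R}$. $\phi$ is singular-equicontinuous if for every $\epsilon>0$ there is $\delta>0$ such that $x,y\in X$ and $d(x,y)\le\delta\,dist(x,Sing(\phi))$ imply $d(\phi_t(x),\phi_t(y))\le\epsilon$ for all $t\in\mathbb{R}$. *)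

From HB Require Import structures.
From mathcomp Require Import all_boot all_order all_algebra.
From mathcomp Require Import all_classical all_reals all_analysis.
Set Implicit Arguments. Unset Strict Implicit. Unset Printing Implicit Defensive.
Import Order.TTheory GRing.Theory Num.Theory.
Import numFieldNormedType.Exports.
Local Open Scope classical_set_scope.
Local Open Scope ring_scope.

Section Defs.
Variables (R : realType) (X : Type) (d : X -> X -> R).

Definition is_metric : Prop :=
  [/\ (forall x y, 0 <= d x y),
      (forall x y, d x y = 0 <-> x = y),
      (forall x y, d x y = d y x) &
      (forall x y z, d x z <= d x y + d y z)].

Definition d_open (U : set X) : Prop :=
  forall x, U x -> exists2 r : R, 0 < r & forall y, d x y < r -> U y.

Definition d_compact : Prop :=
  forall (I : Type) (U : I -> set X),
    (forall i, d_open (U i)) -> (forall x, exists i, U i x) ->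
    exists (n : nat) (f : 'I_n -> I), forall x, exists k, U (f k) x.

Definition flow_continuous (phi : R -> X -> X) : Prop :=
  forall (t : R) (x : X) (e : R), 0 < e ->
    exists2 r : R, 0 < r & forall s y, `|s - t| < r -> d x y < r ->
      d (phi s y) (phi t x) < e.

Definition is_flow (phi : R -> X -> X) : Prop :=
  [/\ flow_continuous phi,
      (forall x, phi 0 x = x) &
      (forall t s x, phi (t + s) x = phi t (phi s x))].

Definition orbit_seg (phi : R -> X -> X) (I : set R) (x : X) : set X :=
  [set phi t x | t in I].

Definition Sing (phi : R -> X -> X) : set X := [set x | forall t, phi t x = x].

Definition cball (x : X) (r : R) : set X := [set y | d x y <= r].

Definition diam : R := sup [set r | exists x y, r = d x y].

(* dist(z,A) = inf_{a in A} d(z,a), and dist(z,emptyset) = diam X *)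
Definition dist (z : X) (A : set X) : R :=
  if pselect (exists a, A a) then inf [set d z a | a in A] else diam.

Definition incr_homeo (s : R -> R) : Prop :=
  [/\ (forall a b, a < b -> s a < s b), continuous s & (forall r, exists t, s t = r)].

Definition singular_expansive (phi : R -> X -> X) : Prop :=
  forall e : R, 0 < e -> exists2 del : R, 0 < del &
    forall (x y : X) (s : R -> R), incr_homeo s ->
      (forall t, d (phi t x) (phi (s t) y) <= del * dist (phi t x) (Sing phi)) ->
      exists t0 : R, orbit_seg phi `[t0 - e, t0 + e] x (phi (s t0) y).

Definition singular_equicontinuous (phi : R -> X -> X) : Prop :=
  forall e : R, 0 < e -> exists2 del : R, 0 < del &
    forall x y : X, d x y <= del * dist x (Sing phi) ->
      forall t, d (phi t x) (phi t y) <= e.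

End Defs.

From mathcomp Require Import all_boot all_order all_algebra.
From mathcomp Require Import all_classical all_reals all_analysis.
Import Order.TTheory GRing.Theory Num.Theory.
Local Open Scope classical_set_scope.
Local Open Scope ring_scope.

(* Singular expansivity is immediate: the hypothesis at time 0 puts the
   shadowing point phi_(s 0)(y) into B[x, del dist(x, Sing)], hence into
   phi_[-e,e](x).  For singular equicontinuity, a point y close enough to x
   relative to dist(x, Sing) is y = phi_u(x) with |u| small, so
   phi_t(y) = phi_u(phi_t(x)), and by compactness flowing for a short time
   moves every point of X uniformly little. *)

Lemma ord_fun_pos_lbound (R : realDomainType) (n : nat) (g : 'I_n -> R) :
  (forall k, 0 < g k) -> exists2 r : R, 0 < r & forall k, r <= g k.
Proof.
elim: n g => [|n IHn] g g_gt0; first by exists 1 => // -[].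
have [r r_gt0 r_le] := IHn (fun k => g (lift ord0 k)) (fun k => g_gt0 _).
exists (Num.min r (g ord0)); first by rewrite lt_min r_gt0 g_gt0.
by move=> k; case: (unliftP ord0 k) => [j ->|->]; rewrite ge_min ?r_le ?lexx ?orbT.
Qed.

Section CompactMetric.
Variables (R : realType) (X : Type) (d : X -> X -> R).
Hypotheses (d_metric : is_metric d) (X_compact : d_compact d).

Lemma d_open_ball (c : X) (r : R) : d_open d [set y | d c y < r].
Proof.
case: d_metric => _ _ _ d_triangle x /= cx_lt.
exists (r - d c x); first by rewrite subr_gt0.
by move=> y xy_lt; rewrite (le_lt_trans (d_triangle _ x _)) // -ltrBrDl.
Qed.

(* Finitely many of the balls B(x, r_x) cover X; r is the least of their radii. *)
Lemma compact_uniform_radius (Q : X -> R -> Prop) :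
  (forall x, exists2 r : R, 0 < r & Q x r) ->
  exists2 r : R, 0 < r & forall z, exists x rx, [/\ Q x rx, d x z < rx & r <= rx].
Proof.
move=> Q_pos.
pose I := {p : X * R | 0 < p.2 /\ Q p.1 p.2}.
pose U (i : I) := [set y | d (sval i).1 y < (sval i).2].
have U_cover x : exists i, U i x.
  have [r r_gt0 Qxr] := Q_pos x.
  exists (exist _ (x, r) (conj r_gt0 Qxr)); rewrite /U /=.
  by case: d_metric => _ d_eq0 _ _; rewrite (proj2 (d_eq0 x x) erefl).
have [n [f f_cover]] := X_compact I U (fun i => d_open_ball _ _) U_cover.
have [r r_gt0 r_le] :=
  @ord_fun_pos_lbound _ _ (fun k => (sval (f k)).2) (fun k => proj1 (svalP (f k))).
exists r => // z; have [k Ufz] := f_cover z.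
by exists (sval (f k)).1, (sval (f k)).2; split => //; case: (svalP (f k)).
Qed.

Lemma flow_uniform_short_time (phi : R -> X -> X) : is_flow d phi ->
  forall e : R, 0 < e -> exists2 r : R, 0 < r &
    forall z u, `|u| < r -> d z (phi u z) < e.
Proof.
case: d_metric => _ _ d_sym d_triangle [phi_cont phi0 _] e e_gt0.
have e2_gt0 : 0 < e / 2 by rewrite divr_gt0.
pose Q x rx := rx <= e / 2 /\
  forall s y, `|s| < rx -> d x y < rx -> d (phi s y) x < e / 2.
have Q_pos x : exists2 rx, 0 < rx & Q x rx.
  have [rx rx_gt0 rx_cont] := phi_cont 0 x (e / 2) e2_gt0.
  exists (Num.min rx (e / 2)); first by rewrite lt_min rx_gt0.
  split; first by rewrite ge_min lexx orbT.
  move=> s y; rewrite !lt_min => /andP[s_lt _] /andP[xy_lt _].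
  by rewrite -(phi0 x); apply: rx_cont; rewrite ?subr0.
have [r r_gt0 r_cover] := compact_uniform_radius _ Q_pos.
exists r => // z u u_lt; have [x [rx [[rx_le Qx] xz_lt r_le]]] := r_cover z.
rewrite (le_lt_trans (d_triangle _ x _)) // (splitr e) ltrD //.
  by rewrite d_sym (lt_le_trans xz_lt rx_le).
by rewrite d_sym; apply: Qx; rewrite // (lt_le_trans u_lt).
Qed.

End CompactMetric.

Section BallsInShortOrbits.
Variables (R : realType) (X : Type) (d : X -> X -> R) (phi : R -> X -> X).

Definition balls_in_short_orbits : Prop :=
  forall e : R, 0 < e -> exists2 del : R, 0 < del &
    forall x : X,
      cball d x (del * dist d x (Sing phi)) `<=` orbit_seg phi `[- e, e] x.

Hypothesis phi_balls : balls_in_short_orbits.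

Lemma balls_in_short_orbits_singular_expansive :
  (forall x, phi 0 x = x) -> singular_expansive d phi.
Proof.
move=> phi0 e e_gt0; have [del del_gt0 del_balls] := phi_balls _ e_gt0.
exists del => // x y s _ shadow; exists 0.
by rewrite sub0r add0r; apply: del_balls; have := shadow 0; rewrite phi0.
Qed.

Lemma balls_in_short_orbits_singular_equicontinuous :
  is_metric d -> d_compact d -> is_flow d phi -> singular_equicontinuous d phi.
Proof.
move=> d_metric X_compact phi_flow e e_gt0.
have [r r_gt0 short_time] :=
  @flow_uniform_short_time _ _ _ d_metric X_compact _ phi_flow _ e_gt0.
have [del del_gt0 del_balls] := phi_balls _ (divr_gt0 r_gt0 (ltr0n R 2)).
exists del => // x y xy_le t; have [u u_itv <-] := del_balls x y xy_le.
have u_lt : `|u| < r.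
  move: u_itv; rewrite /mkset in_itv /= => /andP[u_ge u_le].
  rewrite (le_lt_trans (y := r / 2)) ?ler_norml ?u_ge //.
  by rewrite ltr_pdivrMr // ltr_pMr // ltr1n.
case: phi_flow => _ _ phiD.
by rewrite -phiD addrC phiD ltW // short_time.
Qed.

End BallsInShortOrbits.

Theorem mainTheorem17 (R : realType) (X : Type) (d : X -> X -> R)
  (phi : R -> X -> X) :
  is_metric d -> d_compact d -> is_flow d phi ->
  (forall e : R, 0 < e -> exists2 del : R, 0 < del &
     forall x : X,
       cball d x (del * dist d x (Sing phi)) `<=` orbit_seg phi `[- e, e] x) ->
  singular_expansive d phi /\ singular_equicontinuous d phi.
Proof.
move=> d_metric X_compact phi_flow phi_balls; split.
  by apply: balls_in_short_orbits_singular_expansive => //; case: phi_flow.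
exact: balls_in_short_orbits_singular_equicontinuous.
Qed.
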